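(* Let $F$ be a field with $\mathrm{char}\,F\ne2$ and let $A$ be an involutive $F$-algebra with involution $a\mapsto\bar a$ and trace $\mathrm{tr}(a)=a+\bar a\in F$. Then: (1) $\overline{ab}-ba=\mathrm{tr}(a)\mathrm{tr}(b)-\mathrm{tr}(a)b-\mathrm{tr}(b)a$ for all $a,b\in A$; (2) $A$ is von-Neumann finite if and only if for all $a,b\in A$ with $ab\in F\setminus\{0\}$ (i.e. $ab$ is a nonzero scalar multiple of $1$), either $a,b\in\mathrm{Im}\,A$ or $1,a,b$ are linearly dependent; (3) $A$ is reversible if and only if for all $a,b\in A$ with $ab=0$, either $a,b\in\mathrm{Im}\,A$ or $1,a,b$ are linearly dependent.
   Context: Algebras are unital with bilinear, not necessarily associative, multiplication; $F$ is identified with $F1$. $A$ is involutive if there is an anti-automorphism $\sigma$ (written $\sigma(a)=\bar a$) with $\sigma^2=\mathrm{id}$ and $a+\bar a\in F1$, $a\bar a\in F1$ for all $a$. $\mathrm{Im}\,A=\{u\in A\setminus F1: u^2\in F1\}\cup\{0\}$. von-Neumann finite: $ab=1\Rightarrow ba=1$; reversible: $ab=0\Rightarrow ba=0$. *)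

(* A (not necessarily associative) unital F-algebra is
   modelled as an F-module V with a bilinear multiplication mul and unit one. *)
From mathcomp Require Import all_boot all_algebra.
Set Implicit Arguments. Unset Strict Implicit. Unset Printing Implicit Defensive.
Import GRing.Theory.
Local Open Scope ring_scope.

Section NonAssocAlg.
Variables (F : fieldType) (V : lmodType F).

Definition bilinear_mul (mul : V -> V -> V) : Prop :=
  (forall (c : F) x y z, mul (c *: x + y) z = c *: mul x z + mul y z) /\
  (forall (c : F) x y z, mul z (c *: x + y) = c *: mul z x + mul z y).

(* unital, with F identified with F1 (so 1 <> 0) *)
Definition unital (mul : V -> V -> V) (one : V) : Prop :=
  one != 0 /\ (forall x, mul one x = x /\ mul x one = x).

Definition inF1 (one x : V) : Prop := exists c : F, x = c *: one.

Definition anti_involution (mul : V -> V -> V) (sigma : V -> V) : Prop :=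
  (forall (c : F) x y, sigma (c *: x + y) = c *: sigma x + sigma y) /\
  (forall x y, sigma (mul x y) = mul (sigma y) (sigma x)) /\
  (forall x, sigma (sigma x) = x).

Definition involutive_alg (mul : V -> V -> V) (one : V) (sigma : V -> V) : Prop :=
  anti_involution mul sigma /\
  (forall a, inF1 one (a + sigma a) /\ inF1 one (mul a (sigma a))).

Definition inIm (mul : V -> V -> V) (one u : V) : Prop :=
  u = 0 \/ (~ inF1 one u /\ inF1 one (mul u u)).

Definition lin_dep3 (x y z : V) : Prop :=
  exists c0 c1 c2 : F, [\/ c0 != 0, c1 != 0 | c2 != 0] /\
    c0 *: x + c1 *: y + c2 *: z = 0.

Definition vN_finite (mul : V -> V -> V) (one : V) : Prop :=
  forall a b, mul a b = one -> mul b a = one.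

Definition reversible (mul : V -> V -> V) : Prop :=
  forall a b, mul a b = 0 -> mul b a = 0.

End NonAssocAlg.

From mathcomp Require Import all_boot all_algebra.
From Stdlib Require Import Classical.
Set Implicit Arguments. Unset Strict Implicit. Unset Printing Implicit Defensive.
Import GRing.Theory.
Local Open Scope ring_scope.

(* Writing [bar a = tr a - a] and expanding [bar (ab) = bar b bar a] gives
   identity (1).  By (1), [ba = bar (ab)] holds exactly when
   [tr a tr b - tr a b - tr b a = 0]; such a relation is a linear dependence
   of [1, a, b] unless both traces vanish, and an element of trace zero lies
   in [Im A] or in [F].  Conversely, a dependence of [1, a, b] forces
   [ab = ba], and for [a, b] in [Im A] (1) gives [ba = bar (ab)].  When [ab]
   is a scalar, [bar (ab) = ab], so either way [ba = ab]; with [ab = 1] resp.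
   [ab = 0] this is (2) resp. (3). *)

Section Bilinear.
Variables (F : fieldType) (V : lmodType F) (mul : V -> V -> V).
Hypothesis hbil : bilinear_mul mul.

Lemma bmulDl x y z : mul (x + y) z = mul x z + mul y z.
Proof. by have := hbil.1 1 x y z; rewrite !scale1r. Qed.

Lemma bmulDr x y z : mul z (x + y) = mul z x + mul z y.
Proof. by have := hbil.2 1 x y z; rewrite !scale1r. Qed.

Lemma bmul0l z : mul 0 z = 0.
Proof. by apply: (addrI (mul 0 z)); rewrite addr0 -bmulDl addr0. Qed.

Lemma bmul0r z : mul z 0 = 0.
Proof. by apply: (addrI (mul z 0)); rewrite addr0 -bmulDr addr0. Qed.

Lemma bmulZl c x z : mul (c *: x) z = c *: mul x z.
Proof. by have := hbil.1 c x 0 z; rewrite !addr0 bmul0l addr0. Qed.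

Lemma bmulZr c x z : mul z (c *: x) = c *: mul z x.
Proof. by have := hbil.2 c x 0 z; rewrite !addr0 bmul0r addr0. Qed.

Lemma bmulNl x z : mul (- x) z = - mul x z.
Proof. by rewrite -scaleN1r bmulZl scaleN1r. Qed.

Lemma bmulNr x z : mul z (- x) = - mul z x.
Proof. by rewrite -scaleN1r bmulZr scaleN1r. Qed.

Variable one : V.
Hypothesis hunit : unital mul one.

Lemma bmul1l x : mul one x = x. Proof. exact: (hunit.2 x).1. Qed.
Lemma bmul1r x : mul x one = x. Proof. exact: (hunit.2 x).2. Qed.

Lemma lin_dep3_mul_comm a b : lin_dep3 one a b -> mul a b = mul b a.
Proof.
case=> c0 [c1 [c2 [hne heq]]].
have [c2_0|c2_neq0] := eqVneq c2 0; last first.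
  move/eqP: heq; rewrite addrC addr_eq0 => /eqP hb.
  apply: (scalerI c2_neq0).
  by rewrite -bmulZr -bmulZl hb bmulNl bmulNr bmulDl bmulDr
    !bmulZl !bmulZr bmul1l bmul1r.
move: heq hne; rewrite c2_0 scale0r addr0.
have [c1_0|c1_neq0] := eqVneq c1 0; last first.
  move=> /eqP; rewrite addrC addr_eq0 => /eqP ha _.
  apply: (scalerI c1_neq0).
  by rewrite -bmulZl -bmulZr ha bmulNl bmulNr bmulZl bmulZr bmul1l bmul1r.
rewrite c1_0 scale0r addr0 => /eqP.
rewrite scaler_eq0 (negbTE hunit.1) orbF => /eqP ->.
by rewrite eqxx; case.
Qed.

Lemma vN_finite_scalar a b c : vN_finite mul one -> c != 0 ->
  mul a b = c *: one -> mul b a = c *: one.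
Proof.
move=> vn c_neq0 hab.
have : mul a (c^-1 *: b) = one by rewrite bmulZr hab scalerA mulVf ?scale1r.
by move/vn; rewrite bmulZl => <-; rewrite scalerA divff ?scale1r.
Qed.

End Bilinear.

Section Involution.
Variables (F : fieldType) (V : lmodType F) (mul : V -> V -> V) (one : V)
  (sigma : V -> V) (tr : V -> F).
Hypotheses (hbil : bilinear_mul mul) (hunit : unital mul one)
  (hinv : involutive_alg mul one sigma)
  (htr : forall a, a + sigma a = tr a *: one).

Definition Im_pair_or_dep (a b : V) : Prop :=
  (inIm mul one a /\ inIm mul one b) \/ lin_dep3 one a b.

Lemma sigma_mul x y : sigma (mul x y) = mul (sigma y) (sigma x).
Proof. exact: hinv.1.2.1. Qed.

Lemma sigma0 : sigma 0 = 0.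
Proof.
have := hinv.1.1 1 0 0; rewrite !scale1r addr0 => h.
by apply: (addrI (sigma 0)); rewrite addr0 -h.
Qed.

Lemma sigmaZ c x : sigma (c *: x) = c *: sigma x.
Proof. by have := hinv.1.1 c x 0; rewrite !addr0 sigma0 addr0. Qed.

Lemma sigma_one : sigma one = one.
Proof.
have sigma_one_mull x : mul (sigma one) x = x.
  by have := sigma_mul (sigma x) one; rewrite (bmul1r hunit) !hinv.1.2.2.
by rewrite -[RHS]sigma_one_mull (bmul1r hunit).
Qed.

Lemma sigma_scalar c : sigma (c *: one) = c *: one.
Proof. by rewrite sigmaZ sigma_one. Qed.

Lemma sigmaE a : sigma a = tr a *: one - a.
Proof. by rewrite -htr addrC addKr. Qed.

Lemma tr0 : tr 0 = 0.
Proof.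
have /eqP := htr 0; rewrite sigma0 addr0 eq_sym scaler_eq0.
by rewrite (negbTE hunit.1) orbF => /eqP.
Qed.

Lemma trace_identity a b :
  sigma (mul a b) - mul b a = (tr a * tr b) *: one - tr a *: b - tr b *: a.
Proof.
rewrite sigma_mul !sigmaE !(bmulDl hbil) !(bmulDr hbil) !(bmulNl hbil).
rewrite !(bmulNr hbil) !(bmulZl hbil) !(bmulZr hbil) !(bmul1l hunit).
rewrite !(bmul1r hunit) scalerA opprK addrA addrK [tr b * _]mulrC addrAC.
by [].
Qed.

(* [tr a a = a bar a + a a] is a scalar, so [a] is one unless [tr a = 0]. *)
Lemma inIm_tr a : inIm mul one a -> tr a = 0.
Proof.
case=> [->|[a_notF1 [k haa]]]; first exact: tr0.
have [k' ha_bar] := (hinv.2 a).2.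
move: ha_bar; rewrite sigmaE (bmulDr hbil) (bmulNr hbil) (bmulZr hbil).
rewrite (bmul1r hunit) haa => /eqP; rewrite subr_eq => /eqP ha.
have [//|tr_neq0] := eqVneq (tr a) 0; case: a_notF1.
exists ((tr a)^-1 * (k' + k)).
by rewrite -scalerA scalerDl -ha scalerA mulVf ?scale1r.
Qed.

Lemma tr_eq0_inIm a : tr a = 0 -> inIm mul one a \/ inF1 one a.
Proof.
move=> tr_a; have [|a_notF1] := classic (inF1 one a); [by right | left; right].
split=> //; have [k ha_bar] := (hinv.2 a).2.
exists (- k); move: ha_bar; rewrite sigmaE tr_a scale0r sub0r (bmulNr hbil).
by move=> haa; rewrite -[mul a a]opprK haa scaleNr.
Qed.

Lemma inF1_lin_dep3l a b : inF1 one a -> lin_dep3 one a b.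
Proof.
case=> k ->; exists k, (-1), 0; split; first by constructor 2; rewrite oppr_eq0 oner_eq0.
by rewrite scale0r addr0 scaleN1r subrr.
Qed.

Lemma inF1_lin_dep3r a b : inF1 one b -> lin_dep3 one a b.
Proof.
case=> k ->; exists k, 0, (-1); split; first by constructor 3; rewrite oppr_eq0 oner_eq0.
by rewrite scale0r addr0 scaleN1r subrr.
Qed.

Lemma Im_pair_or_dep_of_sigma_mul a b :
  sigma (mul a b) = mul b a -> Im_pair_or_dep a b.
Proof.
move=> hab; have rel := trace_identity a b; rewrite hab subrr in rel.
have [tr_a|tr_a] := eqVneq (tr a) 0; have [tr_b|tr_b] := eqVneq (tr b) 0.
- have [Ia|Fa] := tr_eq0_inIm tr_a; last by right; apply: inF1_lin_dep3l.
  have [Ib|Fb] := tr_eq0_inIm tr_b; last by right; apply: inF1_lin_dep3r.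
  by left.
all: right; exists (tr a * tr b), (- tr b), (- tr a).
all: split; last by rewrite !scaleNr addrAC rel.
- by constructor 2; rewrite oppr_eq0.
- by constructor 3; rewrite oppr_eq0.
- by constructor 2; rewrite oppr_eq0.
Qed.

Lemma mul_comm_of_Im_pair_or_dep a b :
  sigma (mul a b) = mul a b -> Im_pair_or_dep a b -> mul b a = mul a b.
Proof.
move=> sym_ab [[Ia Ib]|dep]; last by rewrite (lin_dep3_mul_comm hbil hunit dep).
apply/eqP; rewrite -sym_ab eq_sym -subr_eq0 trace_identity.
by rewrite (inIm_tr Ia) (inIm_tr Ib) !scale0r GRing.mul0r scale0r !subr0.
Qed.

End Involution.

Theorem lemma4p6 (F : fieldType) (V : lmodType F)
  (mul : V -> V -> V) (one : V) (sigma : V -> V) (tr : V -> F)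
  (hchar : (2%:R : F) != 0)
  (hbil : bilinear_mul mul) (hunit : unital mul one)
  (hinv : involutive_alg mul one sigma)
  (htr : forall a, a + sigma a = tr a *: one) :
  (forall a b, sigma (mul a b) - mul b a
               = (tr a * tr b) *: one - tr a *: b - tr b *: a) /\
  (vN_finite mul one <->
     (forall a b, (exists c : F, c != 0 /\ mul a b = c *: one) ->
        (inIm mul one a /\ inIm mul one b) \/ lin_dep3 one a b)) /\
  (reversible mul <->
     (forall a b, mul a b = 0 ->
        (inIm mul one a /\ inIm mul one b) \/ lin_dep3 one a b)).
Proof.
have dichotomy := Im_pair_or_dep_of_sigma_mul hbil hunit hinv htr.
have comm := mul_comm_of_Im_pair_or_dep hbil hunit hinv htr.
split; first exact: trace_identity.
split; split.
- move=> vn a b [c [c_neq0 hab]]; apply: dichotomy.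
  by rewrite hab (sigma_scalar hunit hinv) (vN_finite_scalar hbil vn c_neq0 hab).
- move=> H a b hab; rewrite -hab; apply: comm; first by rewrite hab (sigma_one hunit hinv).
  by apply: H; exists 1; rewrite oner_neq0 scale1r.
- move=> rev a b hab; apply: dichotomy.
  by rewrite hab (rev _ _ hab) (sigma0 hinv).
- move=> H a b hab; rewrite -hab; apply: comm; last exact: H.
  by rewrite hab (sigma0 hinv).
Qed.
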